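(* For each $k\ge1$ there is a cone complex $\mathcal{S}_k$ in $M_{\mathbb{R}}$ whose support $\bigcup_{\sigma\in\mathcal{S}_k}\sigma$ equals \[\mathcal{W}_k=\{\theta\in M_{\mathbb{R}}:\text{there exists a nonzero }\theta\text{-semistable object }E\in\mathcal{A}\text{ of total dimension}\le k\}.\] In particular $\mathcal{W}_k$ is closed.
   Context: $Q$ is a quiver (finite vertex set $V(Q)$, finite arrow set), $\mathbb{C}Q$ its path algebra, $I\subset\mathbb{C}Q$ a two-sided ideal spanned by linear combinations of paths of length $\ge2$, and $\mathcal{A}=\mathrm{rep}(Q,I)$ the abelian category of finite-dimensional left $\mathbb{C}Q/I$-modules. $N=\mathbb{Z}^{V(Q)}$ with basis $(e_i)$; each $E\in\mathcal{A}$ has a dimension vector $d(E)\in N$; $M=\mathrm{Hom}(N,\mathbb{Z})$, $M_{\mathbb{R}}=M\otimes\mathbb{R}$, and for $\theta\in M_{\mathbb{R}}$ write $\theta(E)=\theta(d(E))$. The total dimension of $E$ is $\dim_{\mathbb{C}}E$. An object $E$ is $\theta$-semistable if $\theta(E)=0$ and every subobject $A\subset E$ satisfies $\theta(A)\le0$. A cone is a convex rational polyhedral cone $\{\sum\lambda_im_i:\lambda_i\ge0\}$ ($m_i\in M$); a face of $\sigma$ is $\sigma\cap n^\perp$ for $n\in N$ with $\theta(n)\ge0$ on $\sigma$; a cone complex is a finite collection of cones closed under taking faces and such that any two intersect in a face of each. *)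

From HB Require Import structures.
From mathcomp Require Import all_boot all_order all_algebra.
From mathcomp Require Import all_classical all_reals all_analysis.
From mathcomp Require Import Rstruct Rstruct_topology.
From mathcomp Require Import complex.
Import Order.TTheory GRing.Theory Num.Theory.

Set Implicit Arguments.
Unset Strict Implicit.
Unset Printing Implicit Defensive.

Local Open Scope ring_scope.
Local Open Scope classical_set_scope.

Notation RR := Rdefinitions.R.
Definition CC : fieldType := complex RR.

(* A quiver is given by finite types V (vertices), A (arrows) and the  *)
(* source / target maps src tgt : A -> V.  A path of positive length   *)
(* is a sequence of arrows [a1; ...; am] (traversed a1 first) with     *)
(* tgt a_j = src a_{j+1}.                                              *)
Section Quiver.
Variables (V A : finType) (src tgt : A -> V).

Definition composable (p : seq A) : bool :=
  if p is a :: q then path (fun a b => tgt a == src b) a q else true.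

(* An element of the path algebra C Q, written as a formal linear
   combination  \sum c_p p  of paths. *)
Definition pathalg_elt := seq (CC * seq A).

Definition len2_comb (r : pathalg_elt) : bool :=
  all (fun cp => (2 <= size cp.2)%N && composable cp.2) r.

(* Finite-dimensional left C Q-modules on C^n (row vectors, acting on  *)
(* the right):  idempotents e_i (i in V) and arrow operators x_a.      *)
Record qmod (n : nat) := QMod { qe : V -> 'M[CC]_n ; qx : A -> 'M[CC]_n }.

Definition is_qmod n (E : qmod n) : Prop :=
  [/\ (forall i, qe E i *m qe E i = qe E i),
      (forall i j, i != j -> qe E i *m qe E j = 0),
      \sum_i qe E i = 1%:M
    & (forall a, qx E a = qe E (src a) *m qx E a *m qe E (tgt a))].

Definition path_act n (E : qmod n) (p : seq A) : 'M[CC]_n :=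
  foldr (fun a M => qx E a *m M) 1%:M p.

Definition elt_act n (E : qmod n) (r : pathalg_elt) : 'M[CC]_n :=
  \sum_(cp <- r) cp.1 *: path_act E cp.2.

(* E is a module over C Q / I : every element of I acts by zero. *)
Definition annihilated (I : pathalg_elt -> Prop) n (E : qmod n) : Prop :=
  forall r, I r -> elt_act E r = 0.

Definition submod n (E : qmod n) (U : 'M[CC]_n) : Prop :=
  (forall i, stablemx U (qe E i)) /\ (forall a, stablemx U (qx E a)).

Definition dimvec n (E : qmod n) (U : 'M[CC]_n) : V -> nat :=
  fun i => \rank (U *m qe E i).

Definition pairing (theta : V -> RR) (d : V -> nat) : RR :=
  \sum_i theta i * (d i)%:R.

Definition semistable (theta : V -> RR) n (E : qmod n) : Prop :=
  pairing theta (dimvec E 1%:M) = 0 /\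
  forall U, submod E U -> pairing theta (dimvec E U) <= 0.

Definition Wset (I : pathalg_elt -> Prop) (k : nat) : set (V -> RR) :=
  [set theta | exists n : nat, (0 < n <= k)%N /\
     exists E : qmod n, [/\ is_qmod E, annihilated I E & semistable theta E]].

Definition zpairing (theta : V -> RR) (n : {ffun V -> int}) : RR :=
  \sum_i theta i * (n i)%:~R.

Definition cone (gens : seq {ffun V -> int}) : set (V -> RR) :=
  [set theta | exists lam : 'I_(size gens) -> RR,
     (forall j, 0 <= lam j) /\
     theta = fun i => \sum_(j < size gens) lam j * ((gens`_j)%R i)%:~R].

Definition is_face (tau sigma : set (V -> RR)) : Prop :=
  exists n : {ffun V -> int},
    (forall theta, sigma theta -> 0 <= zpairing theta n) /\
    tau = sigma `&` [set theta | zpairing theta n = 0].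

Definition cone_complex (S : seq (seq {ffun V -> int})) : Prop :=
  (forall s, s \in S -> forall tau, is_face tau (cone s) ->
      exists2 s', s' \in S & cone s' = tau) /\
  (forall s t, s \in S -> t \in S ->
      is_face (cone s `&` cone t) (cone s) /\
      is_face (cone s `&` cone t) (cone t)).

Definition cc_support (S : seq (seq {ffun V -> int})) : set (V -> RR) :=
  [set theta | exists2 s, s \in S & cone s theta].

End Quiver.

(* Only finitely many dimension vectors d occur for objects of total dimension
   at most k, namely those with entries at most k, and theta-semistability
   asks some theta(d) to vanish and others to be nonpositive.  So it persists
   on the closed chamber of the arrangement of hyperplanes d^perp given by the
   sign pattern of theta, and W_k is the union of the closed chambers it
   contains.  Each chamber is a polyhedral cone, hence finitely generated
   (Fourier-Motzkin elimination), and the faces of the chambers contained in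
   W_k form a cone complex: the chamber of sign pattern t cuts out of the
   chamber of sign pattern s a face, exposed by one linear form that is
   nonnegative on the latter.  A finite union of closed chambers is closed. *)

From HB Require Import structures.
From mathcomp Require Import all_boot all_order all_algebra.
From mathcomp Require Import all_classical all_reals all_analysis.
From mathcomp Require Import Rstruct Rstruct_topology.
From mathcomp Require Import ring lra zify.
Import Order.TTheory GRing.Theory Num.Theory.
Import numFieldNormedType.Exports.
Local Open Scope classical_set_scope.
Set Implicit Arguments.
Unset Strict Implicit.
Unset Printing Implicit Defensive.

Section PolyhedralCones.
Local Open Scope ring_scope.
Variable V : finType.
Notation ivec := {ffun V -> int}.
Notation rvec := (V -> RR).
Implicit Types (G : seq ivec) (g h m n : ivec) (x y : rvec) (c : RR).

Definition vec g : rvec := fun i => (g i)%:~R.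
Definition vadd x y : rvec := fun i => x i + y i.
Definition vscal c x : rvec := fun i => c * x i.
Definition vzero : rvec := fun _ => 0.
Definition zpair n g : int := \sum_i n i * g i.

Fixpoint cone_rec G x : Prop :=
  if G is g :: G' then
    exists c, 0 <= c /\ exists y, cone_rec G' y /\ x = vadd (vscal c (vec g)) y
  else x = vzero.

Lemma coneE G : cone G = cone_rec G.
Proof.
apply/funext => x; apply/propext; split.
  elim: G x => [|g G IH] x [lam [lam0 ->]] /=.
    by apply/funext => i; rewrite big_ord0.
  exists (lam ord0); split => //.
  exists (fun i => \sum_(j < size G) lam (lift ord0 j) * ((G`_j) i)%:~R).
  split; first by apply: IH; exists (fun j => lam (lift ord0 j)).
  by apply/funext => i; rewrite /vadd /vscal /vec big_ord_recl.
elim: G x => [|g G IH] x /=.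
  by move=> ->; exists (fun=> 0); split => //; apply/funext => i; rewrite big_ord0.
move=> [c [c0 [y [/IH [lam [lam0 ->]] ->]]]].
exists (fun j => if unlift ord0 j is Some j' then lam j' else c); split.
  by move=> j; case: (unlift ord0 j).
apply/funext => i; rewrite /vadd /vscal /vec big_ord_recl unlift_none /=.
by congr (_ + _); apply: eq_bigr => j _; rewrite liftK.
Qed.

Definition conic (K : set rvec) : Prop := [/\ K vzero,
  (forall x y, K x -> K y -> K (vadd x y)) &
  (forall c x, 0 <= c -> K x -> K (vscal c x))].

Lemma cone_rec0 G : cone_rec G vzero.
Proof.
elim: G => [|g G IH] //=; exists 0; split => //; exists vzero; split => //.
by apply/funext => i; rewrite /vadd /vscal /vzero mul0r addr0.
Qed.

Lemma cone_recD G x y : cone_rec G x -> cone_rec G y -> cone_rec G (vadd x y).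
Proof.
elim: G x y => [|g G IH] x y /=.
  by move=> -> ->; apply/funext => i; rewrite /vadd /vzero addr0.
move=> [c [c0 [x' [hx' ->]]]] [d [d0 [y' [hy' ->]]]].
exists (c + d); split; first by rewrite addr_ge0.
exists (vadd x' y'); split; first exact: IH.
by apply/funext => i; rewrite /vadd /vscal; ring.
Qed.

Lemma cone_recZ G c x : 0 <= c -> cone_rec G x -> cone_rec G (vscal c x).
Proof.
elim: G x => [|g G IH] x c0 /=.
  by move=> ->; apply/funext => i; rewrite /vscal /vzero mulr0.
move=> [d [d0 [x' [hx' ->]]]].
exists (c * d); split; first by rewrite mulr_ge0.
exists (vscal c x'); split; first exact: IH.
by apply/funext => i; rewrite /vadd /vscal; ring.
Qed.

Lemma conic_cone_rec G : conic (cone_rec G).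
Proof. by split; [exact: cone_rec0 | exact: cone_recD | move=> c x; exact: cone_recZ]. Qed.

Lemma cone_rec_gen G g : g \in G -> cone_rec G (vec g).
Proof.
elim: G => [|h G IH] //=; rewrite inE => /orP [/eqP ->|/IH hg].
  exists 1; split => //; exists vzero; split; first exact: cone_rec0.
  by apply/funext => i; rewrite /vadd /vscal /vzero mul1r addr0.
exists 0; split => //; exists (vec g); split => //.
by apply/funext => i; rewrite /vadd /vscal mul0r add0r.
Qed.

Lemma cone_rec_min G (K : set rvec) :
  conic K -> (forall g, g \in G -> K (vec g)) -> cone_rec G `<=` K.
Proof.
move=> [K0 KD KZ]; elim: G => [|g G IH] hG x /=; first by move=> ->.
move=> [c [c0 [y [hy ->]]]]; apply: KD; first by apply/KZ/hG; rewrite ?inE ?eqxx.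
by apply: IH hy => h hh; apply: hG; rewrite inE hh orbT.
Qed.

Lemma cone_rec_subset G G' : {subset G <= G'} -> cone_rec G `<=` cone_rec G'.
Proof.
move=> sGG'; apply: cone_rec_min; first exact: conic_cone_rec.
by move=> g /sGG'; exact: cone_rec_gen.
Qed.

Lemma zpairingD x y n : zpairing (vadd x y) n = zpairing x n + zpairing y n.
Proof. by rewrite /zpairing -big_split; apply: eq_bigr => i _; rewrite /vadd mulrDl. Qed.

Lemma zpairingZ c x n : zpairing (vscal c x) n = c * zpairing x n.
Proof. by rewrite /zpairing mulr_sumr; apply: eq_bigr => i _; rewrite /vscal mulrA. Qed.

Lemma zpairing0 n : zpairing vzero n = 0.
Proof. by rewrite /zpairing big1 // => i _; rewrite /vzero mul0r. Qed.

Lemma zpairing_vec g n : zpairing (vec g) n = (zpair n g)%:~R.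
Proof.
rewrite /zpairing /zpair rmorph_sum; apply: eq_bigr => i _.
by rewrite /vec rmorphM /= mulrC.
Qed.

Lemma zpairingN x n : zpairing x (- n) = - zpairing x n.
Proof. by rewrite /zpairing -sumrN; apply: eq_bigr => i _; rewrite ffunE rmorphN /= mulrN. Qed.

Lemma conic_ge0 n : conic [set x | 0 <= zpairing x n].
Proof.
split => [|x y /= hx hy|c x c0 /= hx]; rewrite /= ?zpairing0 //.
  by rewrite zpairingD addr_ge0.
by rewrite zpairingZ mulr_ge0.
Qed.

Lemma conic_le0 n : conic [set x | zpairing x n <= 0].
Proof.
split => [|x y /= hx hy|c x c0 /= hx]; rewrite /= ?zpairing0 //.
  by rewrite zpairingD; lra.
by rewrite zpairingZ; nra.
Qed.

Lemma conic_eq0 n : conic [set x | zpairing x n = 0].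
Proof.
split => [|x y /= hx hy|c x c0 /= hx]; rewrite /= ?zpairing0 //.
  by rewrite zpairingD hx hy addr0.
by rewrite zpairingZ hx mulr0.
Qed.

Lemma conicI K L : conic K -> conic L -> conic (K `&` L).
Proof.
move=> [K0 KD KZ] [L0 LD LZ]; split => //.
  by move=> x y [? ?] [? ?]; split; [apply: KD | apply: LD].
by move=> c x c0 [? ?]; split; [apply: KZ | apply: LZ].
Qed.

Lemma cone_rec_ge0 G n : (forall g, g \in G -> 0 <= zpair n g) ->
  cone_rec G `<=` [set x | 0 <= zpairing x n].
Proof.
move=> hG; apply: cone_rec_min; first exact: conic_ge0.
by move=> g /hG; rewrite /= zpairing_vec ler0z.
Qed.

Lemma cone_rec_le0 G n : (forall g, g \in G -> zpair n g <= 0) ->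
  cone_rec G `<=` [set x | zpairing x n <= 0].
Proof.
move=> hG; apply: cone_rec_min; first exact: conic_le0.
by move=> g /hG; rewrite /= zpairing_vec lerz0.
Qed.

Lemma cone_rec_eq0 G n : (forall g, g \in G -> zpair n g = 0) ->
  cone_rec G `<=` [set x | zpairing x n = 0].
Proof.
move=> hG; apply: cone_rec_min; first exact: conic_eq0.
by move=> g /hG; rewrite /= zpairing_vec => ->.
Qed.


Lemma cone_rec_face G n : (forall g, g \in G -> 0 <= zpair n g) ->
  cone_rec G `&` [set x | zpairing x n = 0] = cone_rec [seq g <- G | zpair n g == 0].
Proof.
move=> hG; apply/seteqP; split => x; last first.
  move=> hx; split; first by apply: cone_rec_subset hx => g; rewrite mem_filter => /andP [].
  by apply: cone_rec_eq0 hx => g; rewrite mem_filter => /andP [/eqP].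
move=> [hx hn]; elim: G hG x hx hn => [|g G IH] hG x /=; first by move=> ->.
move=> [c [c0 [y [hy ->]]]]; rewrite zpairingD zpairingZ zpairing_vec => h0.
have hG' h : h \in G -> 0 <= zpair n h by move=> hh; apply: hG; rewrite inE hh orbT.
have hg0 : 0 <= zpair n g by apply: hG; rewrite inE eqxx.
have hy0 : 0 <= zpairing y n := cone_rec_ge0 hG' hy.
have hcg : c * (zpair n g)%:~R = 0.
  by apply/eqP; rewrite eq_le mulr_ge0 ?ler0z // andbT -h0 lerDl.
have hy' : cone_rec [seq g <- G | zpair n g == 0] y.
  by apply: (IH hG' y hy); move: h0; rewrite hcg add0r.
case: ifP => [_|/negbT hz]; first by exists c; split => //; exists y.
move/eqP: hcg; rewrite mulf_eq0 intr_eq0 (negbTE hz) orbF => /eqP ->.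
by rewrite (_ : vadd _ y = y) //; apply/funext => i; rewrite /vadd /vscal mul0r add0r.
Qed.

Lemma dominant_combination (N : nat) (a b : int) :
  (`|b| < N)%N -> 0 <= a -> (a = 0 -> 0 <= b) ->
  0 <= N%:Z * a + b /\ (N%:Z * a + b == 0) = (a == 0) && (b == 0).
Proof.
move=> hb ha hab; have [a0|a_ne0] := eqVneq a 0.
  by rewrite a0 mulr0 add0r; split => //; apply: hab.
have a_pos : 0 < a by rewrite lt_neqAle eq_sym a_ne0.
have hNa : N%:Z <= N%:Z * a by rewrite ler_peMr.
have hpos : 0 < N%:Z * a + b by lia.
by rewrite (gt_eqF hpos); split => //; apply: ltW.
Qed.

Lemma zpair_mulD (N : int) n m g :
  zpair [ffun i => N * n i + m i] g = N * zpair n g + zpair m g.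
Proof.
rewrite /zpair mulr_sumr -big_split.
by apply: eq_bigr => i _; rewrite ffunE mulrDl mulrA.
Qed.

(* [N n + m] exposes the face of the face once [N] dominates [m] on [G]. *)
Lemma face_of_face G n m :
  (forall g, g \in G -> 0 <= zpair n g) ->
  (forall x, cone_rec G x -> zpairing x n = 0 -> 0 <= zpairing x m) ->
  exists2 n', (forall g, g \in G -> 0 <= zpair n' g) &
    cone_rec G `&` [set x | zpairing x n' = 0] =
    cone_rec G `&` [set x | zpairing x n = 0] `&` [set x | zpairing x m = 0].
Proof.
move=> hn hm.
pose N := (\max_(u <- G) `|zpair m u|).+1.
pose n' := [ffun i => N%:Z * n i + m i].
have hm' g : g \in G -> zpair n g = 0 -> 0 <= zpair m g.
  move=> hg hg0; have := hm _ (cone_rec_gen hg).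
  by rewrite !zpairing_vec hg0 ler0z; apply.
have key g : g \in G ->
    0 <= zpair n' g /\ (zpair n' g == 0) = (zpair n g == 0) && (zpair m g == 0).
  move=> hg; rewrite zpair_mulD; apply: dominant_combination; last exact: hm'.
    by rewrite ltnS; apply: leq_bigmax_seq.
  exact: hn.
exists n'; first by move=> g /key [].
rewrite (cone_rec_face (fun g hg => proj1 (key g hg))) (cone_rec_face hn).
rewrite (@cone_rec_face _ m); last first.
  by move=> g; rewrite mem_filter => /andP [/eqP h0 hg]; apply: hm'.
rewrite -filter_predI; congr cone_rec; apply: eq_in_filter => g /key [_ ->].
by rewrite andbC.
Qed.


Definition elim_comb a g h : ivec := [ffun i => zpair a g * h i - zpair a h * g i].

Lemma vec_elim_comb a g h : vec (elim_comb a g h) =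
  vadd (vscal (zpair a g)%:~R (vec h)) (vscal (- (zpair a h)%:~R) (vec g)).
Proof. by apply/funext => i; rewrite /vec /vadd /vscal ffunE rmorphB /= !rmorphM /=; ring. Qed.

Lemma zpair_elim_comb a g h : zpair a (elim_comb a g h) = 0.
Proof.
rewrite /zpair (eq_bigr (fun i => zpair a g * (a i * h i) - zpair a h * (a i * g i))).
  by rewrite sumrB -!mulr_sumr mulrC subrr.
by move=> i _; rewrite ffunE; ring.
Qed.

Section FourierMotzkin.
Variables (a : ivec) (G : seq ivec).

Definition fm_zero := [seq g <- G | zpair a g == 0].
Definition fm_pos := [seq g <- G | 0 < zpair a g].
Definition fm_neg := [seq g <- G | zpair a g < 0].
Definition fm_gens :=
  fm_zero ++ fm_pos ++ [seq elim_comb a g h | g <- fm_pos, h <- fm_neg].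

Lemma cone_rec_sign_split x : cone_rec G x -> exists xz xp xn,
  [/\ cone_rec fm_zero xz, cone_rec fm_pos xp, cone_rec fm_neg xn
    & x = vadd xz (vadd xp xn)].
Proof.
rewrite /fm_zero /fm_pos /fm_neg; elim: G x => [|g G' IH] x /=.
  move=> ->; exists vzero, vzero, vzero; split => //.
  by apply/funext => i; rewrite /vadd /vzero !addr0.
move=> [c [c0 [y [/IH [xz [xp [xn [hz hp hn ->]]]] ->]]]].
case: (ltrgtP (zpair a g) 0) => hg /=.
- exists xz, xp, (vadd (vscal c (vec g)) xn); split => //=.
    by exists c; split => //; exists xn.
  by apply/funext => i; rewrite /vadd /vscal; ring.
- exists xz, (vadd (vscal c (vec g)) xp), xn; split => //=.
    by exists c; split => //; exists xp.
  by apply/funext => i; rewrite /vadd /vscal; ring.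
- exists (vadd (vscal c (vec g)) xz), xp, xn; split => //=.
    by exists c; split => //; exists xz.
  by apply/funext => i; rewrite /vadd /vscal; ring.
Qed.

Lemma mem_fm_zero g : g \in fm_zero -> g \in fm_gens.
Proof. by rewrite mem_cat => ->. Qed.

Lemma mem_fm_pos g : g \in fm_pos -> g \in fm_gens.
Proof. by rewrite !mem_cat => ->; rewrite orbT. Qed.

Lemma mem_fm_comb g h : g \in fm_pos -> h \in fm_neg -> elim_comb a g h \in fm_gens.
Proof. by move=> hg hh; rewrite !mem_cat; apply/or3P/Or33/allpairs_f. Qed.

Lemma fm_gens_sub : cone_rec fm_gens `<=` cone_rec G `&` [set x | 0 <= zpairing x a].
Proof.
apply: cone_rec_min; first exact/conicI/conic_ge0/conic_cone_rec.
move=> g; rewrite !mem_cat => /or3P [|hg|].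
- rewrite mem_filter => /andP [/eqP h0 hg]; split; first exact: cone_rec_gen.
  by rewrite /= zpairing_vec h0.
- move: hg; rewrite mem_filter => /andP [h0 hg]; split; first exact: cone_rec_gen.
  by rewrite /= zpairing_vec ler0z ltW.
- move=> /allpairsP [[g1 h1] /= [hg1 hh1 ->]].
  split; last by rewrite /= zpairing_vec zpair_elim_comb.
  move: hg1 hh1; rewrite !mem_filter => /andP [p1 g1G] /andP [n1 h1G].
  rewrite vec_elim_comb; apply: cone_recD; apply: cone_recZ; try exact: cone_rec_gen.
    by rewrite ler0z ltW.
  by rewrite oppr_ge0 lerz0 ltW.
Qed.

Lemma fm_pos_ge0 : cone_rec fm_pos `<=` [set x | 0 <= zpairing x a].
Proof. by apply: cone_rec_ge0 => g; rewrite mem_filter => /andP [/ltW]. Qed.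

Lemma fm_neg_le0 : cone_rec fm_neg `<=` [set x | zpairing x a <= 0].
Proof. by apply: cone_rec_le0 => g; rewrite mem_filter => /andP [/ltW]. Qed.

Lemma fm_zero_eq0 : cone_rec fm_zero `<=` [set x | zpairing x a = 0].
Proof. by apply: cone_rec_eq0 => g; rewrite mem_filter => /andP [/eqP]. Qed.

Lemma fm_comb_cone h : h \in fm_neg -> forall xp, cone_rec fm_pos xp ->
  cone_rec fm_gens (vadd (vscal (zpairing xp a) (vec h)) (vscal (- (zpair a h)%:~R) xp)).
Proof.
move=> hh xp hxp; pose w y := vadd (vscal (zpairing y a) (vec h)) (vscal (- (zpair a h)%:~R) y).
apply: (@cone_rec_min _ [set y | cone_rec fm_gens (w y)] _ _ xp hxp); last first.
  by move=> g hg; rewrite /= /w zpairing_vec -vec_elim_comb; exact/cone_rec_gen/mem_fm_comb.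
split => [|y z|c y c0] /=.
- rewrite (_ : w vzero = vzero); first exact: cone_rec0.
  by apply/funext => i; rewrite /w /vadd /vscal zpairing0 /vzero; ring.
- rewrite (_ : w (vadd y z) = vadd (w y) (w z)); first exact: cone_recD.
  by apply/funext => i; rewrite /w /vadd /vscal zpairingD; ring.
- rewrite (_ : w (vscal c y) = vscal c (w y)); first exact: cone_recZ.
  by apply/funext => i; rewrite /w /vadd /vscal zpairingZ; ring.
Qed.

(* Each negative generator [h] is absorbed by the positive part: for [c > 0],
   [xp + c h] is a nonnegative combination of [xp] and of [<xp,a> h - <a,h> xp],
   which lies in the cone of the combinations [elim_comb a g h]. *)
Lemma fm_absorb_neg (L : seq ivec) : {subset L <= fm_neg} -> forall xp xn,
  cone_rec fm_pos xp -> cone_rec L xn -> 0 <= zpairing (vadd xp xn) a ->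
  cone_rec fm_gens (vadd xp xn).
Proof.
elim: L => [|h L IH] sL xp xn hxp /=.
  move=> -> _; rewrite (_ : vadd xp vzero = xp).
    by apply: cone_rec_subset hxp => g; exact: mem_fm_pos.
  by apply/funext => i; rewrite /vadd /vzero addr0.
move=> [c [c0 [y [hy ->]]]].
have sL' : {subset L <= fm_neg} by move=> u hu; apply: sL; rewrite inE hu orbT.
have hh : h \in fm_neg by apply: sL; rewrite inE eqxx.
have q_lt0 : (zpair a h)%:~R < 0 :> RR by move: hh; rewrite mem_filter ltrz0 => /andP [].
have := fm_pos_ge0 hxp; have := fm_neg_le0 (cone_rec_subset sL' hy).
rewrite /= !zpairingD zpairingZ zpairing_vec.
set P := zpairing xp a; set q := (zpair a h)%:~R : RR; set Y := zpairing y a.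
move=> Y_le0 P_ge0 hsum.
have [c_gt0|c_le0] := ltrP 0 c; last first.
  have c_eq0 : c = 0 by lra.
  rewrite (_ : vadd xp _ = vadd xp y); last first.
    by apply/funext => i; rewrite /vadd /vscal c_eq0; ring.
  by apply: IH => //; rewrite zpairingD -/P -/Y; move: hsum; rewrite c_eq0 mul0r add0r.
have cq_lt0 : c * q < 0 by rewrite pmulr_rlt0.
have P_gt0 : 0 < P by lra.
pose z := vscal ((P + c * q) / P) xp.
pose w := vscal (c / P) (vadd (vscal P (vec h)) (vscal (- q) xp)).
have hz : cone_rec fm_pos z by apply: cone_recZ => //; apply: divr_ge0; lra.
have hw : cone_rec fm_gens w.
  by apply: cone_recZ; [apply: divr_ge0; lra | exact: fm_comb_cone].
have hzy : cone_rec fm_gens (vadd z y).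
  by apply: IH => //; rewrite zpairingD zpairingZ -/P -/Y divfK ?gt_eqF //; lra.
rewrite (_ : vadd xp _ = vadd (vadd z y) w); first exact: cone_recD.
by apply/funext => i; rewrite /z /w /vadd /vscal; field; rewrite gt_eqF.
Qed.

Lemma fm_gensE : cone_rec fm_gens = cone_rec G `&` [set x | 0 <= zpairing x a].
Proof.
apply/seteqP; split; first exact: fm_gens_sub.
move=> x [/cone_rec_sign_split [xz [xp [xn [hz hp hn ->]]]] /=].
rewrite !zpairingD (fm_zero_eq0 hz) add0r -zpairingD => hxa.
apply: cone_recD; first by apply: cone_rec_subset hz => g; exact: mem_fm_zero.
exact: (@fm_absorb_neg fm_neg).
Qed.

End FourierMotzkin.

Definition polyhedral (F : seq ivec) : set rvec :=
  [set x | forall n, n \in F -> 0 <= zpairing x n].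

Definition coord_gens : seq ivec :=
  [seq [ffun j => (i == j)%:Z] | i <- enum V] ++
  [seq [ffun j => - (i == j)%:Z] | i <- enum V].

Lemma cone_rec_coord_gens x : cone_rec coord_gens x.
Proof.
have coord_mem s : cone_rec coord_gens (fun j => \sum_(i <- s) x i * (i == j)%:R).
  elim: s => [|i s IH].
    by rewrite (_ : (fun _ => _) = vzero); [exact: cone_rec0 | apply/funext => j; rewrite big_nil].
  rewrite (_ : (fun j => _) = vadd (fun j => x i * (i == j)%:R)
                                    (fun j => \sum_(i <- s) x i * (i == j)%:R)); last first.
    by apply/funext => j; rewrite big_cons.
  apply: cone_recD => //; have [xi_ge0|xi_lt0] := lerP 0 (x i).
    rewrite (_ : (fun j => _) = vscal (x i) (vec [ffun j => (i == j)%:Z])); last first.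
      by apply/funext => j; rewrite /vscal /vec ffunE; case: (i == j).
    by apply: cone_recZ => //; apply: cone_rec_gen; rewrite mem_cat map_f ?mem_enum.
  rewrite (_ : (fun j => _) = vscal (- x i) (vec [ffun j => - (i == j)%:Z])); last first.
    apply/funext => j; rewrite /vscal /vec ffunE.
    by case: (i == j); rewrite /= ?oppr0 ?mulr0 ?mulrNN.
  apply: cone_recZ; first lra.
  by apply: cone_rec_gen; rewrite mem_cat map_f ?orbT ?mem_enum.
rewrite (_ : x = fun j => \sum_(i <- enum V) x i * (i == j)%:R) //.
apply/funext => j; rewrite (bigD1_seq j) ?mem_enum ?enum_uniq //= eqxx mulr1.
by rewrite big1 ?addr0 // => i /negbTE ->; rewrite mulr0.
Qed.

(* Minkowski-Weyl, by Fourier-Motzkin elimination. *)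
Lemma polyhedral_finitely_generated F : exists G, cone_rec G = polyhedral F.
Proof.
elim: F => [|a F [G hG]].
  by exists coord_gens; apply/seteqP; split => x // _; exact: cone_rec_coord_gens.
exists (fm_gens a G); rewrite fm_gensE hG; apply/seteqP; split => x.
  by move=> [hF ha] b; rewrite inE => /orP [/eqP ->|/hF].
move=> h; split; last by apply: h; rewrite inE eqxx.
by move=> b hb; apply: h; rewrite inE hb orbT.
Qed.

End PolyhedralCones.

Section WallChambers.
Local Open Scope ring_scope.
Variables (V A : finType) (src tgt : A -> V) (I : pathalg_elt A -> Prop) (k : nat).
Notation ivec := {ffun V -> int}.
Notation rvec := (V -> RR).
Notation W := (Wset src tgt I k).
Notation dims := {ffun V -> 'I_k.+1}.
Notation signs := {ffun dims -> option bool}.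

Definition dim_form (f : dims) : ivec := [ffun i => (f i : nat)%:Z].

Definition sign_cond (o : option bool) (r : RR) : Prop :=
  match o with None => r = 0 | Some true => 0 <= r | Some false => r <= 0 end.

Definition chamber (s : signs) : set rvec :=
  [set x | forall f, sign_cond (s f) (zpairing x (dim_form f))].

Definition sign_forms (o : option bool) (d : ivec) : seq ivec :=
  match o with None => [:: d; - d] | Some true => [:: d] | Some false => [:: - d] end.

Definition chamber_forms (s : signs) : seq ivec :=
  flatten [seq sign_forms (s f) (dim_form f) | f <- enum dims].

Lemma chamber_polyhedral s : polyhedral (chamber_forms s) = chamber s.
Proof.
apply/seteqP; split => x /= hx.
  move=> f; have {}hx n : n \in sign_forms (s f) (dim_form f) -> 0 <= zpairing x n.
    by move=> hn; apply: hx; apply/flatten_mapP; exists f; rewrite ?mem_enum.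
  have := hx (dim_form f); have := hx (- dim_form f); rewrite zpairingN.
  by case: (s f) => [[]|] /=; rewrite !inE ?eqxx ?orbT => h1 h2; [exact: h2 | lra | lra].
move=> n /flatten_mapP [f _]; have := hx f; rewrite /sign_forms.
case: (s f) => [[]|] /= hf; rewrite !inE; first by move/eqP ->.
  by move/eqP ->; rewrite zpairingN; lra.
by move=> /orP [] /eqP ->; rewrite ?zpairingN; lra.
Qed.

Definition bound_dims (d : V -> nat) : dims := [ffun i => inord (d i)].

Lemma pairing_bound_dims n (E : qmod V A n) (U : 'M[CC]_n) th : (n <= k)%N ->
  pairing th (dimvec E U) = zpairing th (dim_form (bound_dims (dimvec E U))).
Proof.
move=> nk; rewrite /pairing /zpairing; apply: eq_bigr => i _; rewrite !ffunE inordK //.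
by rewrite ltnS (leq_trans (rank_leq_col _)).
Qed.

Definition sign_pattern (th : rvec) : signs :=
  [ffun f => let r := zpairing th (dim_form f) in if r == 0 then None else Some (0 < r)].

Lemma chamber_sign_pattern th : chamber (sign_pattern th) th.
Proof.
move=> f; rewrite ffunE /=; case: eqP => [//|_].
by case: ltrP => //= /ltW.
Qed.

Lemma sign_cond_sign_pattern (r r' : RR) :
  sign_cond (if r == 0 then None else Some (0 < r)) r' ->
  (r = 0 -> r' = 0) /\ (r <= 0 -> r' <= 0).
Proof.
case: eqP => [-> /= ->|/eqP r_neq0] //=.
by case: ltrP => /= h h'; split => // hr; lra.
Qed.

Lemma Wset_chamber th : W th -> chamber (sign_pattern th) `<=` W.
Proof.
move=> [n [hn [E [hq ha [h1 hU]]]]] th' hc.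
have nk : (n <= k)%N by case/andP: hn.
exists n; split => //; exists E; split => //; split.
  have := hc (bound_dims (dimvec E 1%:M)); rewrite ffunE -!pairing_bound_dims //.
  by move=> /sign_cond_sign_pattern [+ _]; apply.
move=> U hs; have := hU U hs.
have := hc (bound_dims (dimvec E U)); rewrite ffunE -!pairing_bound_dims //.
by move=> /sign_cond_sign_pattern [_ +]; apply.
Qed.

Definition chamber_gens (s : signs) : seq ivec :=
  sval (cid (polyhedral_finitely_generated (chamber_forms s))).

Lemma chamber_gensE s : cone_rec (chamber_gens s) = chamber s.
Proof. by rewrite /chamber_gens; case: cid => G /= ->; exact: chamber_polyhedral. Qed.

Definition W_chamber (s : signs) : Prop := chamber s `<=` W.

(* Every face of a finitely generated cone is generated by a subsequence of
   its generators, so these finitely many lists contain all faces of chambers. *)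
Definition face_candidates : seq (seq ivec) :=
  flatten [seq [seq mask (val t) (chamber_gens s)
                | t <- enum {: (size (chamber_gens s)).-tuple bool}]
          | s <- enum signs].

Definition W_face (t : seq ivec) : Prop :=
  exists2 s, W_chamber s & is_face (cone t) (cone (chamber_gens s)).

Definition wall_complex : seq (seq ivec) := [seq t <- face_candidates | `[< W_face t >]].

Lemma filter_face_candidates s (p : pred ivec) :
  [seq g <- chamber_gens s | p g] \in face_candidates.
Proof.
rewrite filter_mask; apply/flatten_mapP; exists s; first by rewrite mem_enum.
by apply/mapP; exists (map_tuple p (in_tuple (chamber_gens s))); rewrite ?mem_enum.
Qed.

Lemma mem_wall_complex t : t \in wall_complex <-> t \in face_candidates /\ W_face t.
Proof.
rewrite mem_filter; split => [/andP [/asboolP ? ?]|[? /asboolP ?]]; first by split.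
exact/andP.
Qed.

Lemma is_face_cone (tau : set rvec) (G : seq ivec) : is_face tau (cone G) <->
  exists2 n, (forall g, g \in G -> 0 <= zpair n g) &
    tau = cone_rec G `&` [set x | zpairing x n = 0].
Proof.
rewrite coneE; split => [[n [hn ->]]|[n hn ->]].
  by exists n => // g hg; have := hn _ (cone_rec_gen hg); rewrite zpairing_vec ler0z.
by exists n; split => // x /(cone_rec_ge0 hn).
Qed.

Lemma wall_complex_face t : t \in wall_complex -> exists2 s, W_chamber s &
  exists2 n, (forall g, g \in chamber_gens s -> 0 <= zpair n g) &
    cone_rec t = cone_rec (chamber_gens s) `&` [set x | zpairing x n = 0].
Proof.
move=> /mem_wall_complex [_ [s Ws /is_face_cone [n hn e]]].
by exists s => //; exists n; rewrite // -coneE.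
Qed.

Definition sign_gap (o o' : option bool) : int :=
  if o == o' then 0 else if o is Some b then (if b then 1 else -1) else 0.

Definition gap_form (s t : signs) : ivec :=
  [ffun i => \sum_(f : dims) sign_gap (s f) (t f) * dim_form f i].

Lemma zpairing_gap_form x s t : zpairing x (gap_form s t) =
  \sum_(f : dims) (sign_gap (s f) (t f))%:~R * zpairing x (dim_form f).
Proof.
rewrite /zpairing; under eq_bigr do rewrite ffunE rmorph_sum mulr_sumr.
rewrite exchange_big; apply: eq_bigr => f _; rewrite mulr_sumr.
by apply: eq_bigr => i _; rewrite rmorphM /=; ring.
Qed.

Lemma sign_gap_term o o' r : sign_cond o r ->
  0 <= (sign_gap o o')%:~R * r /\ ((sign_gap o o')%:~R * r = 0 <-> sign_cond o' r).
Proof.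
case: o => [[]|]; case: o' => [[]|] /= h; rewrite /sign_gap /= ?mul0r ?mul1r ?mulN1r.
all: by split; [lra | split => h'; lra].
Qed.

Lemma gap_form_ge0 s t x : chamber s x -> 0 <= zpairing x (gap_form s t).
Proof.
move=> hx; rewrite zpairing_gap_form; apply: sumr_ge0 => f _.
by have [] := sign_gap_term (t f) (hx f).
Qed.

Lemma gap_form_eq0 s t x : chamber s x -> (zpairing x (gap_form s t) = 0 <-> chamber t x).
Proof.
move=> hx; rewrite zpairing_gap_form; split.
  move=> h0 f; have [_ <-] := sign_gap_term (t f) (hx f).
  apply: (psumr_eq0P _ h0) => // g _.
  by have [] := sign_gap_term (t g) (hx g).
move=> ht; apply: big1 => f _.
by have [_ ->] := sign_gap_term (t f) (hx f); apply: ht.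
Qed.

Lemma wall_complex_inter_face t u : t \in wall_complex -> u \in wall_complex ->
  is_face (cone t `&` cone u) (cone t).
Proof.
move=> /wall_complex_face [s _ [n1 hn1 et]] /wall_complex_face [s' _ [n2 hn2 eu]].
have t_chamber x : cone_rec t x -> chamber s x by rewrite et chamber_gensE => -[].
have gap_ge0 g : g \in t -> 0 <= zpair (gap_form s s') g.
  by move=> hg; have := gap_form_ge0 s' (t_chamber _ (cone_rec_gen hg)); rewrite zpairing_vec ler0z.
have n2_ge0 x : cone_rec t x -> zpairing x (gap_form s s') = 0 -> 0 <= zpairing x n2.
  move=> hx /(gap_form_eq0 s' (t_chamber _ hx)); rewrite -chamber_gensE.
  exact: cone_rec_ge0 hn2 x.
have [n' hn' e'] := face_of_face gap_ge0 n2_ge0.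
apply/is_face_cone; exists n' => //; rewrite e' !coneE eu.
apply/seteqP; split => x /=.
  move=> [hx [hs' hn2x]]; split => //; split => //.
  by apply/(gap_form_eq0 s' (t_chamber _ hx)); rewrite -chamber_gensE.
move=> [[hx h0] hn2x]; split => //; split => //.
by rewrite chamber_gensE; exact/(gap_form_eq0 s' (t_chamber _ hx)).
Qed.

Lemma wall_complex_faces t tau : t \in wall_complex -> is_face tau (cone t) ->
  exists2 t', t' \in wall_complex & cone t' = tau.
Proof.
move=> ht /is_face_cone [m hm ->].
have [s Ws [n hn et]] := wall_complex_face ht.
have m_ge0 x : cone_rec (chamber_gens s) x -> zpairing x n = 0 -> 0 <= zpairing x m.
  by move=> hx hx0; apply: (cone_rec_ge0 hm); rewrite et.
have [n' hn' e'] := face_of_face hn m_ge0.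
exists [seq g <- chamber_gens s | zpair n' g == 0].
  apply/mem_wall_complex; split; first exact: filter_face_candidates.
  by exists s => //; apply/is_face_cone; exists n'; rewrite // coneE -cone_rec_face.
by rewrite coneE -cone_rec_face // e' -et.
Qed.

Lemma wall_complex_cone_complex : cone_complex wall_complex.
Proof.
split; first by move=> t ht tau; exact: wall_complex_faces.
move=> t u ht hu; split; first exact: wall_complex_inter_face.
by rewrite setIC; exact: wall_complex_inter_face.
Qed.

Lemma wall_complex_support : cc_support wall_complex = W.
Proof.
apply/seteqP; split => th.
  move=> [t /mem_wall_complex [_ [s Ws /is_face_cone [n _ ->]]]] [hx _].
  by apply: Ws; rewrite -chamber_gensE.
move=> Wth; exists (chamber_gens (sign_pattern th)); last first.
  by rewrite coneE chamber_gensE; exact: chamber_sign_pattern.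
apply/mem_wall_complex; split.
  by rewrite -(filter_predT (chamber_gens _)); exact: filter_face_candidates.
exists (sign_pattern th); first exact: Wset_chamber.
apply/is_face_cone; exists 0.
  by move=> g _; rewrite /zpair big1 // => i _; rewrite ffunE mul0r.
rewrite coneE; apply/seteqP; split => x /=; last by case.
by move=> hx; split => //; rewrite /zpairing big1 // => i _; rewrite ffunE mulr0.
Qed.

Lemma zpairing_continuous (d : ivec) :
  continuous (fun x : {ptws V -> RR} => zpairing x d).
Proof.
have add_cont (R : realType) : continuous (fun z : (R * R)%type => z.1 + z.2).
  exact: add_continuous.
apply: continuous_big; first exact: add_cont.
move=> i _; rewrite (_ : (fun x => _) = (fun r : RR => r * (d i)%:~R) \o proj i) //.
move=> x; apply: continuous_comp; first exact: proj_continuous.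
exact: mulrr_continuous.
Qed.

Lemma chamber_closed s : closed (chamber s : set {ptws V -> RR}).
Proof.
rewrite (_ : chamber s = \bigcap_(f in [set: dims])
    ((fun x : {ptws V -> RR} => zpairing x (dim_form f)) @^-1` [set r | sign_cond (s f) r])).
  apply: closed_bigI => f _.
  have := (continuous_closedP _).1 (@zpairing_continuous (dim_form f)); apply.
  by case: (s f) => [[]|] /=; [exact: closed_ge | exact: closed_le | exact: closed_eq].
by apply/seteqP; split => x /= hx f; [move=> _ | ]; exact: hx.
Qed.

Lemma Wset_closed : closed (W : set {ptws V -> RR}).
Proof.
rewrite (_ : W = \big[setU/set0]_(s <- enum signs)
                   (if `[< W_chamber s >] then chamber s else set0)).
  apply: closed_bigsetU => s _; case: asboolP => _; [exact: chamber_closed | exact: closed0].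
rewrite -bigcup_seq; apply/seteqP; split => th.
  move=> Wth; exists (sign_pattern th); first by rewrite /= mem_enum.
  by rewrite asboolT; [exact: chamber_sign_pattern | exact: Wset_chamber].
by move=> [s _]; case: asboolP => // Ws; exact: Ws.
Qed.

End WallChambers.

Theorem mainTheorem5 (V A : finType) (src tgt : A -> V)
    (I : pathalg_elt A -> Prop)
    (hI : forall r, I r -> len2_comb src tgt r)
    (k : nat) (hk : (1 <= k)%N) :
  (exists S : seq (seq {ffun V -> int}),
      cone_complex S /\ cc_support S = Wset src tgt I k) /\
  closed (Wset src tgt I k : set {ptws V -> RR}).
Proof.
split; last exact: Wset_closed.
exists (wall_complex src tgt I k).
split; [exact: wall_complex_cone_complex | exact: wall_complex_support].
Qed.
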